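(* None of the groups $(\wr\mathbf{Z})^{\infty}$, $(\mathbf{Z}\wr)^{\infty}$, $(\wr\mathbf{Z}\wr)^{\infty}$ embeds in $W=\bigoplus_{i\in\mathbf{N}}W_i$.
   Context: Restricted wreath product: $A\wr\mathbf{Z}=(\bigoplus_{i\in\mathbf{Z}}A)\rtimes\mathbf{Z}$. $W_0=1$, $W_i=W_{i-1}\wr\mathbf{Z}$; $(\mathbf{Z}\wr)^{\infty}$ is the ascending union of the $W_i$ with $W_i$ embedded in $W_{i+1}$ as the index-$0$ base summand. For permutation groups $(K,X)$, $(L,Y)$, the permutation wreath product $K\wr L\le\mathrm{Sym}(X\times Y)$ is generated by $(x,y)\mapsto(x\kappa,y)$, $(x,y')\mapsto(x,y')$ for $y'\neq y$ ($\kappa\in K$, $y\in Y$) and $(x,y)\mapsto(x,y\lambda)$ ($\lambda\in L$); it is associative. $P_1=\mathbf{Z}$ on $\mathbf{Z}$ by translation, $P_{k+1}=\mathbf{Z}\wr P_k$ with $P_k$ the top group; $(\wr\mathbf{Z})^{\infty}$ is the ascending union of the $P_k$ (a permutation group). $(\wr\mathbf{Z}\wr)^{\infty}$ is the permutation wreath product $(\wr\mathbf{Z})^{\infty}\wr(\mathbf{Z}\wr)^{\infty}$, where $(\mathbf{Z}\wr)^{\infty}$ acts on itself by right multiplication. Equivalently (up to isomorphism): with $\alpha,\beta_0\in PL_o(I)$ given by $x\alpha=x/4$ on $[0,\frac14)$, $x-\frac3{16}$ on $[\frac14,\frac7{16})$, $4x-\frac32$ on $[\frac7{16},\frac9{16})$,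 $x+\frac3{16}$ on $[\frac9{16},\frac34)$, $\frac14x+\frac34$ on $[\frac34,1]$, and $x\beta_0=x$ on $[0,\frac7{16})$, $2x-\frac7{16}$ on $[\frac7{16},\frac{15}{32})$, $x+\frac1{32}$ on $[\frac{15}{32},\frac12)$, $\frac12x+\frac9{32}$ on $[\frac12,\frac9{16})$, $x$ on $[\frac9{16},1]$, and $\beta_k=\alpha^{-k}\beta_0\alpha^k$, the three groups are generated by $\{\beta_i:i<0\}$, $\{\beta_i:i\ge0\}$, $\{\beta_i:i\in\mathbf{Z}\}$ respectively. *)

From Stdlib Require Import Reals ZArith.

(* Groups presented concretely: an ambient type [gT], a membership     *)
(* predicate [gmem] cutting out the elements of the group, its identity *)
(* and its multiplication.  Only the multiplication is needed to speak *)
(* of embeddings: a multiplicative map between groups is a group        *)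
(* homomorphism.                                                       *)
Record grp := Grp {
  gT : Type;
  gmem : gT -> Prop;
  gone : gT;
  gmul : gT -> gT -> gT
}.

Definition embeds (G H : grp) : Prop :=
  exists f : gT G -> gT H,
    (forall x, gmem G x -> gmem H (f x)) /\
    (forall x y, gmem G x -> gmem G y -> f (gmul G x y) = gmul H (f x) (f y)) /\
    (forall x y, gmem G x -> gmem G y -> f x = f y -> x = y).

Definition trivial_grp : grp := Grp unit (fun _ => True) tt (fun _ _ => tt).

(* Restricted wreath product  A wr Z = (bigoplus_{i in Z} A) x| Z. *)
Definition wrZ (A : grp) : grp :=
  Grp ((Z -> gT A) * Z)
      (fun p => (forall i, gmem A (fst p i)) /\
                exists N : Z, forall i : Z, (N < Z.abs i)%Z -> fst p i = gone A)
      (fun _ => gone A, 0%Z)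
      (fun p q => (fun i => gmul A (fst p i) (fst q (i - snd p)%Z),
                   (snd p + snd q)%Z)).

Fixpoint Wn (n : nat) : grp :=
  match n with
  | O => trivial_grp
  | S n' => wrZ (Wn n')
  end.

Definition Wsum : grp :=
  Grp (forall i : nat, gT (Wn i))
      (fun x => (forall i, gmem (Wn i) (x i)) /\
                exists N : nat, forall i : nat, (N < i)%nat -> x i = gone (Wn i))
      (fun i => gone (Wn i))
      (fun x y i => gmul (Wn i) (x i) (y i)).

(* alpha, beta0 in PL_o(I), extended by the identity outside [0,1].    *)
Open Scope R_scope.

Definition alpha (x : R) : R :=
  if Rlt_dec x 0 then x
  else if Rlt_dec x (1/4) then x / 4
  else if Rlt_dec x (7/16) then x - 3/16
  else if Rlt_dec x (9/16) then 4 * x - 3/2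
  else if Rlt_dec x (3/4) then x + 3/16
  else if Rle_dec x 1 then (1/4) * x + 3/4
  else x.

Definition beta0 (x : R) : R :=
  if Rlt_dec x 0 then x
  else if Rlt_dec x (7/16) then x
  else if Rlt_dec x (15/32) then 2 * x - 7/16
  else if Rlt_dec x (1/2) then x + 1/32
  else if Rlt_dec x (9/16) then (1/2) * x + 9/32
  else x.

(* Permutations are written on the right, as in the paper:
   x (p q) = (x p) q.  An element of Sym(R) is a pair (p, p^-1). *)
Definition symT : Type := ((R -> R) * (R -> R))%type.

Definition sym_mul (p q : symT) : symT :=
  (fun x => fst q (fst p x), fun x => snd p (snd q x)).

Definition sym_one : symT := (fun x => x, fun x => x).

Definition sym_inv (p : symT) : symT := (snd p, fst p).

Definition is_sym (p : symT) : Prop :=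
  (forall x, snd p (fst p x) = x) /\ (forall x, fst p (snd p x) = x).

(* p is (the permutation) beta_k = alpha^{-k} beta0 alpha^k, i.e. as a
   function beta_k = alpha^k o beta0 o alpha^{-k}; equivalently
   beta_k o alpha^k = alpha^k o beta0 (k >= 0), and
   alpha^m o beta_{-m} = beta0 o alpha^m (m >= 0). *)
Definition is_beta (k : Z) (p : symT) : Prop :=
  is_sym p /\
  if Z_le_dec 0 k then
    forall x, fst p (Nat.iter (Z.to_nat k) alpha x)
              = Nat.iter (Z.to_nat k) alpha (beta0 x)
  else
    forall x, Nat.iter (Z.to_nat (- k)) alpha (fst p x)
              = beta0 (Nat.iter (Z.to_nat (- k)) alpha x).

Inductive gen (S : symT -> Prop) : symT -> Prop :=
  | gen_base : forall p, S p -> gen S p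
  | gen_one : gen S sym_one
  | gen_mul : forall p q, gen S p -> gen S q -> gen S (sym_mul p q)
  | gen_inv : forall p, gen S p -> gen S (sym_inv p).

Definition beta_grp (P : Z -> Prop) : grp :=
  Grp symT (gen (fun p => exists k, P k /\ is_beta k p)) sym_one sym_mul.

Close Scope R_scope.

Definition wrZ_inf : grp := beta_grp (fun k => (k < 0)%Z).
Definition Zwr_inf : grp := beta_grp (fun k => (0 <= k)%Z).
Definition wrZwr_inf : grp := beta_grp (fun _ => True).

(* An element of W = (+)_i W_i lies in W_0 (+) ... (+) W_N for some N, and W_i is
   solvable of derived length at most i, so each element of W centralises some
   term of the derived series of W; an embedded group inherits this property.
   In the PL model, J_n = alpha^n (7/16, 9/16) supports <beta_0, ..., beta_n>, and
   beta_(n+1) moves J_n off itself twice.  For a, b supported on J_n this gives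
   [a, b] = [[a^-1, beta_(n+1)], [b^-1, beta_(n+1)^2]], so [beta_0, beta_1] lies in
   every term of the derived series of <beta_i : i >= 0>, yet it does not commute
   with beta_2.  Conjugating by powers of alpha transports this to
   <beta_i : i < 0>. *)

From Stdlib Require Import Reals ZArith.
From Stdlib Require Import Lia Lra Classical FunctionalExtensionality.

Section DerivedSeries.
Variables (T : Type) (mul : T -> T -> T).

Inductive mul_closure (X : T -> Prop) : T -> Prop :=
  | mul_closure_base x : X x -> mul_closure X x
  | mul_closure_mul x y : mul_closure X x -> mul_closure X y -> mul_closure X (mul x y).

(* [c] is the commutator [a^-1 b^-1 a b], characterised without inverses so
   that the derived series makes sense in any magma. *)
Definition is_commutator (X : T -> Prop) (c : T) : Prop :=
  exists a b, X a /\ X b /\ mul b (mul a c) = mul a b.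

Fixpoint derived (P : T -> Prop) (k : nat) : T -> Prop :=
  match k with
  | O => P
  | S k => mul_closure (is_commutator (derived P k))
  end.

Lemma mul_closure_commutator_mono (X Y : T -> Prop) x :
  (forall z, X z -> Y z) ->
  mul_closure (is_commutator X) x -> mul_closure (is_commutator Y) x.
Proof.
  intros HXY Hx; induction Hx as [c (a & b & Ha & Hb & E) | x y _ IHx _ IHy].
  - apply mul_closure_base; exists a, b; auto.
  - apply mul_closure_mul; auto.
Qed.

Lemma derived_mono (P Q : T -> Prop) k x :
  (forall z, P z -> Q z) -> derived P k x -> derived Q k x.
Proof.
  revert x; induction k as [|k IHk]; simpl; intros x HPQ D; auto.
  apply (mul_closure_commutator_mono (derived P k)); auto.
Qed.

Lemma derived_shift (P Q : T -> Prop) :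
  (forall c, is_commutator P c -> is_commutator (derived Q 1) c) ->
  forall k x, (1 <= k)%nat -> derived P k x -> derived Q (S k) x.
Proof.
  intros HPQ k x Hk; revert x; induction Hk as [|k Hk IHk]; intros x D.
  - induction D as [c Hc | x y _ IHx _ IHy].
    + apply mul_closure_base; auto.
    + apply mul_closure_mul; auto.
  - apply (mul_closure_commutator_mono (derived P k)); auto.
Qed.

End DerivedSeries.

Arguments mul_closure {T} mul X _.
Arguments mul_closure_base {T mul X} x _.
Arguments mul_closure_mul {T mul X} x y _ _.
Arguments is_commutator {T} mul X c.
Arguments derived {T} mul P k _.

Lemma derived_hom {T U : Type} (mT : T -> T -> T) (mU : U -> U -> U) (f : T -> U)
    (D : T -> Prop) (P : T -> Prop) (Q : U -> Prop) :
  (forall x y, D x -> D y -> D (mT x y)) ->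
  (forall x y, D x -> D y -> f (mT x y) = mU (f x) (f y)) ->
  (forall k x, derived mT P k x -> D x) ->
  (forall x, P x -> Q (f x)) ->
  forall k x, derived mT P k x -> derived mU Q k (f x).
Proof.
  intros HDmul Hf HD HPQ k; induction k as [|k IHk]; simpl; intros x Dx; auto.
  assert (HD' : forall z, mul_closure mT (is_commutator mT (derived mT P k)) z -> D z)
    by exact (HD (S k)).
  induction Dx as [c Hc | x y Dx IHx Dy IHy].
  - apply mul_closure_base. destruct Hc as (a & b & Ha & Hb & E).
    exists (f a), (f b). split; [auto | split; [auto |]].
    assert (Dc : D c) by (apply HD', mul_closure_base; exists a, b; auto).
    assert (Da : D a) by (apply (HD k); auto).
    assert (Db : D b) by (apply (HD k); auto).
    rewrite <- !Hf, E by auto. reflexivity.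
  - rewrite Hf by auto. apply mul_closure_mul; auto.
Qed.

Lemma wrZ_derived_succ (A : grp) (P : gT (wrZ A) -> Prop) k y :
  derived (gmul (wrZ A)) P (S k) y ->
  snd y = 0%Z /\ forall j, derived (gmul A) (fun _ => True) k (fst y j).
Proof.
  revert y; induction k as [|k IHk]; intros y D.
  - split; [|intros; exact I].
    induction D as [c (a & b & _ & _ & E) | x z _ IHx _ IHz].
    + apply (f_equal snd) in E. simpl in E. lia.
    + simpl. lia.
  - change (mul_closure (gmul (wrZ A))
              (is_commutator (gmul (wrZ A)) (derived (gmul (wrZ A)) P (S k))) y) in D.
    induction D as [c (a & b & Ha & Hb & E) | x z _ IHx _ IHz].
    + destruct (IHk a Ha) as [Ea Fa], (IHk b Hb) as [Eb Fb]. split.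
      * apply (f_equal snd) in E. simpl in E. lia.
      * intro j. apply mul_closure_base. exists (fst a j), (fst b j).
        split; [apply Fa | split; [apply Fb |]].
        apply (f_equal (fun p => fst p j)) in E. simpl in E.
        rewrite Ea, Eb, !Z.sub_0_r in E. exact E.
    + destruct IHx as [Ex Fx], IHz as [Ez Fz]. split.
      * simpl. lia.
      * intro j. simpl. rewrite Ex, Z.sub_0_r. apply mul_closure_mul; [apply Fx | apply Fz].
Qed.

Lemma Wn_derived_trivial n : forall k P y,
  (n <= k)%nat -> derived (gmul (Wn n)) P k y -> y = gone (Wn n).
Proof.
  induction n as [|n IHn]; intros k P y Hk D.
  - destruct y; reflexivity.
  - destruct k as [|k]; [lia|].
    destruct (wrZ_derived_succ (Wn n) P k y D) as [E F].
    destruct y as [yf ym]; simpl in E, F |- *; subst ym. f_equal.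
    apply functional_extensionality; intro j. apply (IHn k (fun _ => True)); auto; lia.
Qed.

Lemma Wn_mul1l n x : gmul (Wn n) (gone (Wn n)) x = x.
Proof.
  induction n as [|n IHn].
  - destruct x; reflexivity.
  - destruct x as [xf xm]; simpl. f_equal.
    apply functional_extensionality; intro j. rewrite Z.sub_0_r. apply IHn.
Qed.

Lemma Wn_mul1r n x : gmul (Wn n) x (gone (Wn n)) = x.
Proof.
  induction n as [|n IHn].
  - destruct x; reflexivity.
  - destruct x as [xf xm]; simpl. f_equal; [|lia].
    apply functional_extensionality; intro j. apply IHn.
Qed.

Lemma Wsum_derived_commute x y N k :
  (forall i, (N < i)%nat -> x i = gone (Wn i)) -> (N <= k)%nat ->
  derived (gmul Wsum) (fun _ => True) k y -> gmul Wsum x y = gmul Wsum y x.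
Proof.
  intros Hx Hk Dy. simpl. apply functional_extensionality_dep; intro i.
  destruct (Compare_dec.le_lt_dec i N) as [Hi | Hi].
  - assert (Dyi : derived (gmul (Wn i)) (fun _ => True) k (y i)).
    { apply (derived_hom (gmul Wsum) (gmul (Wn i)) (fun z => z i) (fun _ => True)
               (fun _ => True)); auto. }
    rewrite (Wn_derived_trivial i k _ (y i) ltac:(lia) Dyi), Wn_mul1l, Wn_mul1r.
    reflexivity.
  - rewrite (Hx i Hi), Wn_mul1l, Wn_mul1r. reflexivity.
Qed.

Lemma not_embeds_Wsum (G : grp) (g : gT G) :
  (forall x y, gmem G x -> gmem G y -> gmem G (gmul G x y)) ->
  (forall k x, derived (gmul G) (gmem G) k x -> gmem G x) ->
  gmem G g ->
  (forall k, exists h, derived (gmul G) (gmem G) k h /\ gmul G g h <> gmul G h g) ->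
  ~ embeds G Wsum.
Proof.
  intros Hmul Hder Hg Hdeep (f & Hfmem & Hfmul & Hfinj).
  destruct (Hfmem g Hg) as [_ [N HN]].
  destruct (Hdeep N) as [h [Hh Hgh]].
  assert (Hh' : gmem G h) by (apply (Hder N); auto).
  assert (Dfh : derived (gmul Wsum) (fun _ => True) N (f h))
    by (apply (derived_hom (gmul G) (gmul Wsum) f (gmem G) (gmem G)); auto).
  apply Hgh, Hfinj; auto.
  rewrite !Hfmul by auto.
  apply (Wsum_derived_commute _ _ N N); auto.
Qed.

Definition comm (x y : symT) : symT :=
  sym_mul (sym_mul (sym_mul (sym_inv x) (sym_inv y)) x) y.

Definition sym_conj (s p : symT) : symT := sym_mul (sym_mul (sym_inv s) p) s.

Definition commute (p q : symT) : Prop := forall x, fst p (fst q x) = fst q (fst p x).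

Definition supported (p : symT) (J : R -> Prop) : Prop :=
  forall x, ~ J x -> fst p x = x /\ snd p x = x.

Lemma sym_ext p q : is_sym p -> is_sym q -> (forall x, fst p x = fst q x) -> p = q.
Proof.
  intros [Hp1 Hp2] [Hq1 Hq2] E. destruct p as [p p'], q as [q q']; simpl in *.
  assert (Epq : p = q) by (apply functional_extensionality; auto). subst q.
  f_equal. apply functional_extensionality; intro y.
  rewrite <- (Hq2 y) at 1. apply Hp1.
Qed.

Lemma is_sym_one : is_sym sym_one.
Proof. split; reflexivity. Qed.

Lemma is_sym_mul p q : is_sym p -> is_sym q -> is_sym (sym_mul p q).
Proof. intros [H1 H2] [H3 H4]; split; intro x; simpl; congruence. Qed.

Lemma is_sym_inv p : is_sym p -> is_sym (sym_inv p).
Proof. intros [H1 H2]; split; intro x; simpl; auto. Qed.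

Lemma is_sym_comm a b : is_sym a -> is_sym b -> is_sym (comm a b).
Proof. intros. unfold comm. auto using is_sym_mul, is_sym_inv. Qed.

Lemma is_sym_conj s p : is_sym s -> is_sym p -> is_sym (sym_conj s p).
Proof. intros. unfold sym_conj. auto using is_sym_mul, is_sym_inv. Qed.

Lemma comm_is_commutator a b : is_sym a -> is_sym b ->
  sym_mul b (sym_mul a (comm a b)) = sym_mul a b.
Proof.
  intros Ha Hb. apply sym_ext; auto using is_sym_mul, is_sym_comm.
  intro x. destruct Ha as [Ha1 _], Hb as [Hb1 _]. simpl. rewrite Ha1, Hb1. reflexivity.
Qed.

Lemma commutator_eq_comm a b c : is_sym a -> is_sym b ->
  sym_mul b (sym_mul a c) = sym_mul a b -> c = comm a b.
Proof.
  intros [Ha1 Ha2] [Hb1 Hb2] E.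
  assert (Ef : forall z, fst c (fst a (fst b z)) = fst b (fst a z))
    by (intro z; exact (f_equal (fun p => fst p z) E)).
  assert (Es : forall z, snd b (snd a (snd c z)) = snd a (snd b z))
    by (intro z; exact (f_equal (fun p => snd p z) E)).
  destruct c as [c c']; simpl in *. unfold comm, sym_mul, sym_inv; simpl. f_equal.
  - apply functional_extensionality; intro w.
    rewrite <- Ef, Hb2, Ha2. reflexivity.
  - apply functional_extensionality; intro w.
    rewrite <- Es, Hb2, Ha2. reflexivity.
Qed.

Lemma sym_conj_mul s p q : is_sym s ->
  sym_conj s (sym_mul p q) = sym_mul (sym_conj s p) (sym_conj s q).
Proof.
  intros [Hs1 Hs2]. unfold sym_conj, sym_mul; simpl.
  f_equal; apply functional_extensionality; intro x; rewrite Hs1; reflexivity.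
Qed.

Lemma sym_conj_one s : is_sym s -> sym_conj s sym_one = sym_one.
Proof.
  intros [_ Hs2]. unfold sym_conj, sym_one, sym_mul, sym_inv; simpl.
  f_equal; apply functional_extensionality; intro x; apply Hs2.
Qed.

Lemma sym_conjK s p : is_sym s -> sym_conj s (sym_conj (sym_inv s) p) = p.
Proof.
  intros [Hs1 Hs2]. destruct p as [p p']. unfold sym_conj, sym_mul; simpl.
  f_equal; apply functional_extensionality; intro x; rewrite !Hs2; reflexivity.
Qed.

Lemma gen_mono (S S' : symT -> Prop) p :
  (forall q, S q -> S' q) -> gen S p -> gen S' p.
Proof. intros HS Hp; induction Hp; [apply gen_base | apply gen_one | apply gen_mul | apply gen_inv]; auto. Qed.

Lemma gen_sym (S : symT -> Prop) p : (forall q, S q -> is_sym q) -> gen S p -> is_sym p.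
Proof. intros HS Hp; induction Hp; auto using is_sym_one, is_sym_mul, is_sym_inv. Qed.

Lemma gen_comm S a b : gen S a -> gen S b -> gen S (comm a b).
Proof. intros. unfold comm. auto using gen_mul, gen_inv. Qed.

Lemma gen_conj (S S' : symT -> Prop) s p : is_sym s ->
  (forall q, S q -> S' (sym_conj s q)) -> gen S p -> gen S' (sym_conj s p).
Proof.
  intros Hs HS Hp; induction Hp.
  - apply gen_base; auto.
  - rewrite sym_conj_one by auto. apply gen_one.
  - rewrite sym_conj_mul by auto. apply gen_mul; auto.
  - apply (gen_inv S' (sym_conj s p)); auto.
Qed.

Lemma derived_gen (S : symT -> Prop) : (forall q, S q -> is_sym q) ->
  forall k p, derived sym_mul (gen S) k p -> gen S p.
Proof.
  intros HS k; induction k as [|k IHk]; simpl; intros p D; auto.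
  induction D as [c (a & b & Ha & Hb & E) | x y _ IHx _ IHy].
  - apply IHk in Ha, Hb.
    rewrite (commutator_eq_comm a b c (gen_sym _ _ HS Ha) (gen_sym _ _ HS Hb) E).
    apply gen_comm; auto.
  - apply gen_mul; auto.
Qed.

Lemma supported_gen (S : symT -> Prop) J p :
  (forall q, S q -> supported q J) -> gen S p -> supported p J.
Proof.
  intros HS Hp; induction Hp as [p Hp | | p q _ IHp _ IHq | p _ IHp].
  - auto.
  - intros x _; simpl; auto.
  - intros x Hx. destruct (IHp x Hx), (IHq x Hx). simpl. split; congruence.
  - intros x Hx. destruct (IHp x Hx). simpl. auto.
Qed.

Lemma supported_fst p J x : is_sym p -> supported p J -> J x -> J (fst p x).
Proof.
  intros [Hp1 _] Hp Hx. apply NNPP; intro N. destruct (Hp _ N) as [_ E].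
  rewrite Hp1 in E. apply N. rewrite <- E. exact Hx.
Qed.

Lemma supported_conj s p J : is_sym s -> supported p J ->
  supported (sym_conj s p) (fun y => J (snd s y)).
Proof.
  intros [_ Hs2] Hp y Hy. destruct (Hp _ Hy) as [E1 E2]. simpl.
  rewrite E1, E2, Hs2. auto.
Qed.

Lemma supported_commute p q J K : is_sym p -> is_sym q ->
  supported p J -> supported q K -> (forall x, J x -> K x -> False) -> commute p q.
Proof.
  intros Sp Sq Hp Hq HJK x.
  destruct (classic (J x)) as [Jx | nJx].
  - assert (Jpx : J (fst p x)) by (apply supported_fst; auto).
    rewrite (proj1 (Hq x (HJK x Jx))), (proj1 (Hq _ (HJK _ Jpx))). reflexivity.
  - rewrite (proj1 (Hp x nJx)).
    destruct (classic (K x)) as [Kx | nKx].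
    + assert (Kqx : K (fst q x)) by (apply supported_fst; auto).
      rewrite (proj1 (Hp _ (fun Jqx => HJK _ Jqx Kqx))). reflexivity.
    + rewrite (proj1 (Hq x nKx)), (proj1 (Hp x nJx)). reflexivity.
Qed.

Lemma commute_fst_snd p q : is_sym q -> commute p q ->
  forall w, fst p (snd q w) = snd q (fst p w).
Proof.
  intros [Hq1 Hq2] Hpq w.
  rewrite <- (Hq1 (fst p (snd q w))), <- Hpq, Hq2. reflexivity.
Qed.

Lemma commute_snd_snd p q : is_sym p -> is_sym q -> commute p q ->
  forall w, snd p (snd q w) = snd q (snd p w).
Proof.
  intros [Hp1 Hp2] [Hq1 Hq2] Hpq w.
  rewrite <- (Hq1 (snd p (snd q w))), <- (Hp1 (fst q (snd p (snd q w)))).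
  rewrite Hpq, Hp2, Hq2. reflexivity.
Qed.

Lemma comm_mul_commuting a b A B :
  is_sym a -> is_sym b -> is_sym A -> is_sym B ->
  commute a A -> commute b A -> commute B A -> commute a B -> commute b B ->
  comm (sym_mul a A) (sym_mul b B) = comm a b.
Proof.
  intros Sa Sb SA SB HaA HbA HBA HaB HbB.
  apply sym_ext; auto using is_sym_comm, is_sym_mul. intro z.
  unfold comm, sym_mul, sym_inv; simpl.
  rewrite (commute_snd_snd a A), (commute_snd_snd B A), (commute_snd_snd b A),
    (commute_fst_snd a A), (proj2 SA) by auto.
  rewrite (commute_snd_snd b B), (commute_fst_snd a B), (commute_fst_snd b B),
    (proj2 SB) by auto.
  reflexivity.
Qed.

(* [[a^-1, t] = a (a^-1)^t] and [[b^-1, t^2] = b (b^-1)^(t^2)] split into pieces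
   supported on [J], [Jt] and [Jt^2], which are pairwise disjoint. *)
Lemma comm_displaced a b t J : is_sym a -> is_sym b -> is_sym t ->
  supported a J -> supported b J ->
  (forall w, J w -> J (snd t w) -> False) ->
  (forall w, J w -> J (snd t (snd t w)) -> False) ->
  comm (comm (sym_inv a) t) (comm (sym_inv b) (sym_mul t t)) = comm a b.
Proof.
  intros Sa Sb St Ha Hb D1 D2.
  assert (Stt : is_sym (sym_mul t t)) by auto using is_sym_mul.
  change (comm (sym_mul a (sym_conj t (sym_inv a)))
               (sym_mul b (sym_conj (sym_mul t t) (sym_inv b))) = comm a b).
  assert (HA : supported (sym_conj t (sym_inv a)) (fun y => J (snd t y)))
    by (apply supported_conj; auto; intros x Hx; destruct (Ha x Hx); auto).
  assert (HB : supported (sym_conj (sym_mul t t) (sym_inv b))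
                 (fun y => J (snd (sym_mul t t) y)))
    by (apply supported_conj; auto; intros x Hx; destruct (Hb x Hx); auto).
  assert (SA : is_sym (sym_conj t (sym_inv a))) by auto using is_sym_conj, is_sym_inv.
  assert (SB : is_sym (sym_conj (sym_mul t t) (sym_inv b)))
    by auto using is_sym_conj, is_sym_inv.
  apply comm_mul_commuting; auto.
  - exact (supported_commute _ _ _ _ Sa SA Ha HA D1).
  - exact (supported_commute _ _ _ _ Sb SA Hb HA D1).
  - exact (supported_commute _ _ _ _ SB SA HB HA (fun x H2 H1 => D1 _ H1 H2)).
  - exact (supported_commute _ _ _ _ Sa SB Ha HB D2).
  - exact (supported_commute _ _ _ _ Sb SB Hb HB D2).
Qed.

Lemma displaced_not_commute h g J x : is_sym g -> supported h J -> fst h x <> x ->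
  (forall w, J w -> J (snd g w) -> False) -> sym_mul g h <> sym_mul h g.
Proof.
  intros [Hg1 _] Hh Hx D E.
  assert (Ex : fst h (fst g x) = fst g (fst h x)) by exact (f_equal (fun p => fst p x) E).
  assert (Jx : J x) by (apply NNPP; intro N; apply Hx, (Hh x N)).
  assert (nJgx : ~ J (fst g x)) by (intro C; apply (D _ C); rewrite Hg1; exact Jx).
  rewrite (proj1 (Hh _ nJgx)) in Ex.
  apply Hx. rewrite <- (Hg1 (fst h x)), <- Ex, Hg1. reflexivity.
Qed.

Open Scope R_scope.

Definition alphainv (y : R) : R :=
  if Rlt_dec y 0 then y
  else if Rlt_dec y (1/16) then 4 * y
  else if Rlt_dec y (1/4) then y + 3/16
  else if Rlt_dec y (3/4) then (y + 3/2) / 4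
  else if Rlt_dec y (15/16) then y - 3/16
  else if Rle_dec y 1 then 4 * y - 3
  else y.

Definition beta0inv (y : R) : R :=
  if Rlt_dec y 0 then y
  else if Rlt_dec y (7/16) then y
  else if Rlt_dec y (1/2) then (y + 7/16) / 2
  else if Rlt_dec y (17/32) then y - 1/32
  else if Rlt_dec y (9/16) then 2 * y - 9/16
  else y.

Ltac case_pieces := repeat match goal with
  | |- context [Rlt_dec ?a ?b] => destruct (Rlt_dec a b)
  | |- context [Rle_dec ?a ?b] => destruct (Rle_dec a b)
  end.

Lemma alphainv_alpha x : alphainv (alpha x) = x.
Proof. unfold alpha; case_pieces; unfold alphainv; case_pieces; lra. Qed.

Lemma alpha_alphainv x : alpha (alphainv x) = x.
Proof. unfold alphainv; case_pieces; unfold alpha; case_pieces; lra. Qed.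

Lemma beta0inv_beta0 x : beta0inv (beta0 x) = x.
Proof. unfold beta0; case_pieces; unfold beta0inv; case_pieces; lra. Qed.

Lemma beta0_beta0inv x : beta0 (beta0inv x) = x.
Proof. unfold beta0inv; case_pieces; unfold beta0; case_pieces; lra. Qed.

Definition J0 (x : R) : Prop := 7/16 < x < 9/16.

Lemma beta0_out x : ~ J0 x -> beta0 x = x.
Proof. unfold J0, beta0; intro H; case_pieces; lra. Qed.

Lemma alpha_J0 x : J0 x -> alpha ((x + 3/2) / 4) = x.
Proof. unfold J0, alpha; intro H; case_pieces; lra. Qed.

Lemma beta0_step1 u : 31/64 < u < 33/64 -> 33/64 < beta0 u < 69/128.
Proof. unfold beta0; intro H; case_pieces; lra. Qed.

Lemma beta0_step2 u : 33/64 < u < 69/128 -> 69/128 < beta0 u < 141/256.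
Proof. unfold beta0; intro H; case_pieces; lra. Qed.

Notation itA n := (Nat.iter n alpha).
Notation itI n := (Nat.iter n alphainv).

Lemma itI_itA n x : itI n (itA n x) = x.
Proof.
  revert x; induction n as [|n IHn]; intro x; auto.
  rewrite (Nat.iter_succ_r n _ alpha); simpl. rewrite IHn. apply alphainv_alpha.
Qed.

Lemma itA_itI n x : itA n (itI n x) = x.
Proof.
  revert x; induction n as [|n IHn]; intro x; auto.
  rewrite (Nat.iter_succ_r n _ alphainv); simpl. rewrite IHn. apply alpha_alphainv.
Qed.

Lemma itA_inj n x y : itA n x = itA n y -> x = y.
Proof. intro E. rewrite <- (itI_itA n x), <- (itI_itA n y), E. reflexivity. Qed.

Definition alpha_pow (n : nat) : symT := (itA n, itI n).
Definition beta0_sym : symT := (beta0, beta0inv).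

Lemma is_sym_alpha_pow n : is_sym (alpha_pow n).
Proof. split; intro x; [apply itI_itA | apply itA_itI]. Qed.

Lemma is_sym_beta0 : is_sym beta0_sym.
Proof. split; intro x; [apply beta0inv_beta0 | apply beta0_beta0inv]. Qed.

Definition beta (k : nat) : symT := sym_conj (alpha_pow k) beta0_sym.
Definition beta_neg1 : symT := sym_conj (sym_inv (alpha_pow 1)) beta0_sym.

Lemma is_beta_nat_spec (i : nat) p :
  is_beta (Z.of_nat i) p -> forall x, fst p (itA i x) = itA i (beta0 x).
Proof.
  intros [_ H]. destruct (Z_le_dec 0 (Z.of_nat i)) as [_|C]; [|lia].
  rewrite Nat2Z.id in H. exact H.
Qed.

Lemma is_beta_beta k : is_beta (Z.of_nat k) (beta k).
Proof.
  split; [apply is_sym_conj; auto using is_sym_alpha_pow, is_sym_beta0|].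
  destruct (Z_le_dec 0 (Z.of_nat k)) as [_|C]; [|lia]. rewrite Nat2Z.id.
  intro x; simpl. rewrite itI_itA. reflexivity.
Qed.

Lemma is_beta_beta_neg1 : is_beta (-1) beta_neg1.
Proof.
  split; [apply is_sym_conj; auto using is_sym_inv, is_sym_alpha_pow, is_sym_beta0|].
  destruct (Z_le_dec 0 (-1)) as [C|_]; [lia|]. simpl. intro x.
  rewrite alpha_alphainv. reflexivity.
Qed.

Lemma is_beta_conj_alpha_pow_inv (i M : nat) p : (i < M)%nat ->
  is_beta (Z.of_nat i) p ->
  is_beta (Z.of_nat i - Z.of_nat M) (sym_conj (sym_inv (alpha_pow M)) p).
Proof.
  intros HiM Hp. split.
  - apply is_sym_conj; [apply is_sym_inv, is_sym_alpha_pow | apply Hp].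
  - destruct (Z_le_dec 0 (Z.of_nat i - Z.of_nat M)) as [C|_]; [lia|].
    replace (Z.to_nat (- (Z.of_nat i - Z.of_nat M))) with (M - i)%nat by lia.
    set (m := (M - i)%nat). replace M with (i + m)%nat by lia.
    intro x; simpl.
    rewrite (Nat.iter_add i m R alpha x), (is_beta_nat_spec i p Hp).
    rewrite (Nat.add_comm i m), (Nat.iter_add m i R alphainv), itI_itA, itA_itI.
    reflexivity.
Qed.

Lemma is_beta_conj_alpha_pow (m : nat) g : is_beta (-1) g ->
  is_beta (Z.of_nat m) (sym_conj (alpha_pow (S m)) g).
Proof.
  intros [Hg Hspec]. split.
  - apply is_sym_conj; auto using is_sym_alpha_pow.
  - destruct (Z_le_dec 0 (-1)) as [C|_] in Hspec; [lia|]. simpl in Hspec.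
    destruct (Z_le_dec 0 (Z.of_nat m)) as [_|C]; [|lia]. rewrite Nat2Z.id.
    intro x. unfold sym_conj, sym_mul, sym_inv, alpha_pow; cbn [fst snd].
    rewrite (Nat.iter_succ_r m R alpha), Hspec.
    change (itI (S m) (itA m x)) with (alphainv (itI m (itA m x))).
    rewrite itI_itA, alpha_alphainv.
    reflexivity.
Qed.

Definition Jn (n : nat) (y : R) : Prop := exists x, J0 x /\ y = itA n x.

Definition Hn (n : nat) : symT -> Prop :=
  gen (fun p => exists i, (i <= n)%nat /\ is_beta (Z.of_nat i) p).

Lemma Jn_succ_repr n y : Jn n y -> exists u, 31/64 < u < 33/64 /\ y = itA (S n) u.
Proof.
  intros [x [Hx E]]. exists ((x + 3/2) / 4). split; [unfold J0 in Hx; lra|].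
  rewrite Nat.iter_succ_r, alpha_J0; auto.
Qed.

Lemma Jn_le i n y : (i <= n)%nat -> Jn i y -> Jn n y.
Proof.
  intro Hin; induction Hin as [|n _ IH]; auto. intro Hy.
  destruct (Jn_succ_repr n y (IH Hy)) as [u [Hu E]].
  exists u; split; [unfold J0; lra | exact E].
Qed.

Lemma supported_beta i n p : (i <= n)%nat -> is_beta (Z.of_nat i) p -> supported p (Jn n).
Proof.
  intros Hin Hp y Hy.
  assert (Efix : fst p y = y).
  { rewrite <- (itA_itI i y), (is_beta_nat_spec i p Hp). f_equal. apply beta0_out.
    intro C. apply Hy, (Jn_le i n); auto. exists (itI i y). rewrite itA_itI; auto. }
  split; auto. destruct Hp as [[Hp1 _] _]. rewrite <- Efix at 1. apply Hp1.
Qed.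

Lemma supported_Hn n p : Hn n p -> supported p (Jn n).
Proof. apply supported_gen. intros q (i & Hi & Hq). eapply supported_beta; eauto. Qed.

Lemma Hn_sym n p : Hn n p -> is_sym p.
Proof. apply gen_sym. intros q (i & _ & Hq). apply Hq. Qed.

Lemma Hn_mono n m p : (n <= m)%nat -> Hn n p -> Hn m p.
Proof. intro Hnm. apply gen_mono. intros q (i & Hi & Hq). exists i; split; auto; lia. Qed.

Lemma beta_in_Hn n : Hn n (beta n).
Proof. apply gen_base. exists n; split; auto. apply is_beta_beta. Qed.

Lemma beta_snd_itA m t y u : is_beta (Z.of_nat m) t -> snd t y = itA m u ->
  y = itA m (beta0 u).
Proof.
  intros Ht E. rewrite <- (is_beta_nat_spec m t Ht), <- E.
  destruct Ht as [[_ Ht2] _]. auto.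
Qed.

(* [J_n] lies in [alpha^(n+1)(31/64, 33/64)], which [beta_(n+1)] pushes through
   [alpha^(n+1)(33/64, 69/128)] into [alpha^(n+1)(69/128, 141/256)]. *)
Lemma Jn_displaced n t : is_beta (Z.of_nat (S n)) t ->
  (forall w, Jn n w -> Jn n (snd t w) -> False) /\
  (forall w, Jn n w -> Jn n (snd t (snd t w)) -> False).
Proof.
  intro Ht. split; intros w Hw Hw'; destruct (Jn_succ_repr n w Hw) as [u [Hu Eu]].
  - destruct (Jn_succ_repr n _ Hw') as [v [Hv Ev]].
    apply (beta_snd_itA _ t) in Ev; auto. rewrite Eu in Ev. apply itA_inj in Ev.
    pose proof (beta0_step1 v Hv). lra.
  - destruct (Jn_succ_repr n _ Hw') as [v [Hv Ev]].
    apply (beta_snd_itA _ t) in Ev; auto. apply (beta_snd_itA _ t) in Ev; auto.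
    rewrite Eu in Ev. apply itA_inj in Ev.
    pose proof (beta0_step2 _ (beta0_step1 v Hv)). lra.
Qed.

Lemma commutator_Hn_deeper n c : is_commutator sym_mul (Hn n) c ->
  is_commutator sym_mul (derived sym_mul (Hn (S n)) 1) c.
Proof.
  intros (a & b & Ha & Hb & E).
  set (t := beta (S n)).
  assert (Ht : is_beta (Z.of_nat (S n)) t) by apply is_beta_beta.
  assert (St : is_sym t) by apply Ht.
  assert (Htn : Hn (S n) t) by apply beta_in_Hn.
  assert (Sa : is_sym a) by (eapply Hn_sym; eauto).
  assert (Sb : is_sym b) by (eapply Hn_sym; eauto).
  assert (Ha' : Hn (S n) (sym_inv a)) by (apply gen_inv, (Hn_mono n); auto).
  assert (Hb' : Hn (S n) (sym_inv b)) by (apply gen_inv, (Hn_mono n); auto).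
  destruct (Jn_displaced n t Ht) as [D1 D2].
  exists (comm (sym_inv a) t), (comm (sym_inv b) (sym_mul t t)).
  split; [|split].
  - apply mul_closure_base. exists (sym_inv a), t.
    auto using comm_is_commutator, is_sym_inv.
  - apply mul_closure_base. exists (sym_inv b), (sym_mul t t).
    split; [exact Hb' | split; [apply gen_mul; auto |]].
    apply comm_is_commutator; auto using is_sym_inv, is_sym_mul.
  - rewrite (commutator_eq_comm a b c Sa Sb E).
    rewrite <- (comm_displaced a b t (Jn n)) by auto using supported_Hn.
    apply comm_is_commutator; auto using is_sym_comm, is_sym_inv, is_sym_mul.
Qed.

Definition comm_beta01 : symT := comm (beta 0) (beta 1).

Lemma comm_beta01_in_Hn1 : Hn 1 comm_beta01.
Proof. apply gen_comm; [apply (Hn_mono 0); [lia|] |]; apply beta_in_Hn. Qed.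

Lemma comm_beta01_derived k : derived sym_mul (Hn (S k)) k comm_beta01.
Proof.
  assert (Hdeep : forall k, (1 <= k)%nat -> derived sym_mul (Hn k) k comm_beta01).
  { intros n Hn1; induction Hn1 as [|n Hn1 IHn].
    - apply mul_closure_base. exists (beta 0), (beta 1).
      split; [apply (Hn_mono 0); [lia | apply beta_in_Hn]|].
      split; [apply beta_in_Hn|].
      apply comm_is_commutator; apply is_beta_beta.
    - apply (derived_shift _ _ (Hn n)); auto using commutator_Hn_deeper. }
  destruct k as [|k]; [exact comm_beta01_in_Hn1|].
  apply (derived_mono _ _ (Hn (S k))); [intros z; apply Hn_mono; lia | apply Hdeep; lia].
Qed.

Lemma comm_beta01_half : fst comm_beta01 (1/2) = 15/32.
Proof.
  assert (E1 : beta0inv (1/2) = 15/32) by (unfold beta0inv; case_pieces; lra).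
  assert (E2 : alphainv (15/32) = 63/128) by (unfold alphainv; case_pieces; lra).
  assert (E3 : beta0inv (63/128) = 119/256) by (unfold beta0inv; case_pieces; lra).
  assert (E4 : alpha (119/256) = 23/64) by (unfold alpha; case_pieces; lra).
  assert (E5 : beta0 (23/64) = 23/64) by (unfold beta0; case_pieces; lra).
  assert (E6 : alphainv (23/64) = 119/256) by (unfold alphainv; case_pieces; lra).
  assert (E7 : beta0 (119/256) = 63/128) by (unfold beta0; case_pieces; lra).
  assert (E8 : alpha (63/128) = 15/32) by (unfold alpha; case_pieces; lra).
  unfold comm_beta01, comm, beta; simpl. rewrite E1, E2, E3, E4, E5, E6, E7, E8. reflexivity.
Qed.

Lemma comm_beta01_not_commute n t : (1 <= n)%nat -> is_beta (Z.of_nat (S n)) t ->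
  sym_mul t comm_beta01 <> sym_mul comm_beta01 t.
Proof.
  intros Hn1 Ht. apply (displaced_not_commute comm_beta01 t (Jn n) (1/2)).
  - apply Ht.
  - apply supported_Hn, (Hn_mono 1); auto using comm_beta01_in_Hn1.
  - rewrite comm_beta01_half. lra.
  - apply (Jn_displaced n t Ht).
Qed.

Close Scope R_scope.

Definition beta_gens (P : Z -> Prop) (p : symT) : Prop := exists k, P k /\ is_beta k p.

Lemma beta_gens_sym P q : beta_gens P q -> is_sym q.
Proof. intros (k & _ & Hq). apply Hq. Qed.

Lemma beta_grp_not_embeds (P : Z -> Prop) g : gen (beta_gens P) g ->
  (forall k, exists h,
     derived sym_mul (gen (beta_gens P)) k h /\ sym_mul g h <> sym_mul h g) ->
  ~ embeds (beta_grp P) Wsum.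
Proof.
  intros Hg Hdeep.
  apply (not_embeds_Wsum (Grp symT (gen (beta_gens P)) sym_one sym_mul) g);
    simpl; auto using gen_mul.
  apply derived_gen, beta_gens_sym.
Qed.

Lemma Hn_gen_nonneg (P : Z -> Prop) n p : (forall i : nat, P (Z.of_nat i)) ->
  Hn n p -> gen (beta_gens P) p.
Proof. intro HP. apply gen_mono. intros q (i & _ & Hq). exists (Z.of_nat i); auto. Qed.

Lemma beta_grp_nonneg_not_embeds (P : Z -> Prop) : (forall i : nat, P (Z.of_nat i)) ->
  ~ embeds (beta_grp P) Wsum.
Proof.
  intro HP. apply beta_grp_not_embeds with (beta 2).
  { apply (Hn_gen_nonneg P 2); auto using beta_in_Hn. }
  intro k. exists comm_beta01. split.
  - apply (derived_mono _ _ (Hn (S k))); [intros; eapply Hn_gen_nonneg; eauto|].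
    apply comm_beta01_derived.
  - apply (comm_beta01_not_commute 1); [lia | apply is_beta_beta].
Qed.

(* Conjugation by [alpha^(k+3)] moves [beta_0, ..., beta_(k+1)] to negative indices. *)
Lemma wrZ_inf_not_embeds : ~ embeds wrZ_inf Wsum.
Proof.
  apply beta_grp_not_embeds with beta_neg1.
  { apply gen_base. exists (-1)%Z. split; [lia | apply is_beta_beta_neg1]. }
  intro k. set (M := S (S (S k))). set (s := sym_inv (alpha_pow M)).
  assert (Ss : is_sym s) by apply is_sym_inv, is_sym_alpha_pow.
  exists (sym_conj s comm_beta01). split.
  - apply (derived_hom sym_mul sym_mul (sym_conj s) (fun _ => True) (Hn (S k)));
      auto using sym_conj_mul, comm_beta01_derived.
    intros p Hp. eapply gen_conj; [exact Ss | | exact Hp]. intros q (i & Hi & Hq).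
    exists (Z.of_nat i - Z.of_nat M)%Z. split; [lia|].
    apply is_beta_conj_alpha_pow_inv; auto. lia.
  - intro E. apply (f_equal (sym_conj (alpha_pow M))) in E.
    rewrite !sym_conj_mul, sym_conjK in E by apply is_sym_alpha_pow.
    revert E. apply (comm_beta01_not_commute (S k)); [lia|].
    apply is_beta_conj_alpha_pow, is_beta_beta_neg1.
Qed.

Theorem lemma21 :
  ~ embeds wrZ_inf Wsum /\ ~ embeds Zwr_inf Wsum /\ ~ embeds wrZwr_inf Wsum.
Proof.
  split; [exact wrZ_inf_not_embeds|].
  split; apply beta_grp_nonneg_not_embeds; intro i; [lia | exact I].
Qed.
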